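(* Let $(X,\rho)$ be a metric space, $A,B$ nonempty subsets of $X$, and let $F:A\times A\to B$, $G:B\times B\to A$ be such that there exist $\alpha,\beta\ge0$ with $\alpha+\beta<1$ and $$\rho(F(x,x'),G(y,y'))\le\alpha\rho(x,y)+\beta\rho(x',y')+(1-(\alpha+\beta))\,\mathrm{dist}(A,B)$$ for all $x,x'\in A$ and $y,y'\in B$. For $(x_0,y_0)\in A\times A$ define recursively, for $n\ge0$, $$x_{2n+1}=F(x_{2n},y_{2n}),\ y_{2n+1}=F(y_{2n},x_{2n}),\qquad x_{2n+2}=G(x_{2n+1},y_{2n+1}),\ y_{2n+2}=G(y_{2n+1},x_{2n+1}).$$ Then the sequences $\{x_n\}_{n=0}^\infty$ and $\{y_n\}_{n=0}^\infty$ are bounded.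
   Context: $\mathrm{dist}(A,B)=\inf\{\rho(a,b):a\in A,\ b\in B\}$. *)

From Stdlib Require Import Reals.
From Coquelicot Require Import Coquelicot.
Open Scope R_scope.

Definition is_metric {X : Type} (rho : X -> X -> R) : Prop :=
  (forall x y, 0 <= rho x y) /\
  (forall x y, rho x y = 0 <-> x = y) /\
  (forall x y, rho x y = rho y x) /\
  (forall x y z, rho x z <= rho x y + rho y z).

Definition set_dist {X : Type} (rho : X -> X -> R) (A B : X -> Prop) : R :=
  real (Glb_Rbar (fun r => exists a b, A a /\ B b /\ r = rho a b)).

Fixpoint coupled_iter {X : Type} (F G : X -> X -> X) (x0 y0 : X) (n : nat)
  : X * X :=
  match n with
  | O => (x0, y0)
  | S k =>
      let p := coupled_iter F G x0 y0 k in
      if Nat.even k then (F (fst p) (snd p), F (snd p) (fst p))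
      else (G (fst p) (snd p), G (snd p) (fst p))
  end.

Definition bounded_seq {X : Type} (rho : X -> X -> R) (u : nat -> X) : Prop :=
  exists M : R, forall n m : nat, rho (u n) (u m) <= M.

From Stdlib Require Import Reals Lra.
Open Scope R_scope.

(* Work on pairs: D(p,q) = rho(p1,q1) + rho(p2,q2) is a metric
   on X*X, and the coupled iteration is z(n+1) = T_F(z n) for n even and
   z(n+1) = T_G(z n) for n odd, where T_H(p) = (H p1 p2, H p2 p1).  The even
   terms lie in A*A, the odd ones in B*B.  Adding the contraction hypothesis
   at (x,x',y,y') and (x',x,y',y) gives, with k = alpha + beta,
       D(T_F p, T_G q) <= k D(p,q) + 2c       (p in A*A, q in B*B),
   c being the constant term.  Measure each z n against a fixed reference of
   the opposite type: z 1 = T_F(z 0) for n even, z 2 = T_G(z 1) for n odd.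
   The distances e n = D(z n, ref n) then satisfy the affine recursion
   e(n+1) <= k e n + C with k < 1, hence are bounded; so D(z n, z 1) is
   bounded, and therefore both coordinate sequences are bounded. *)

Lemma bounded_seq_of_center {X : Type} (rho : X -> X -> R) (Hrho : is_metric rho)
  (u : nat -> X) (a : X) (N : R) :
  (forall n, rho (u n) a <= N) -> bounded_seq rho u.
Proof.
  destruct Hrho as [_ [_ [Hsym Htri]]]; intros Hu.
  exists (2 * N); intros n m.
  pose proof (Htri (u n) a (u m)) as T.
  rewrite (Hsym a (u m)) in T.
  pose proof (Hu n); pose proof (Hu m); lra.
Qed.

(* A real sequence obeying u(n+1) <= k u n + C with 0 <= k < 1 is bounded
   above, by max(u 0, C/(1-k)). *)
Lemma affine_recursion_bound (k C : R) (u : nat -> R) :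
  0 <= k -> k < 1 -> (forall n, u (S n) <= k * u n + C) ->
  exists M, forall n, u n <= M.
Proof.
  intros Hk0 Hk1 Hstep.
  set (M := Rmax (u 0%nat) (C / (1 - k))).
  assert (HC : C <= (1 - k) * M).
  { replace C with ((1 - k) * (C / (1 - k))) at 1 by (field; lra).
    apply Rmult_le_compat_l; [lra | apply Rmax_r]. }
  exists M; induction n as [|n IH].
  - apply Rmax_l.
  - pose proof (Hstep n).
    assert (k * u n <= k * M) by (apply Rmult_le_compat_l; assumption).
    lra.
Qed.

Section CoupledIteration.

Variable X : Type.
Variable rho : X -> X -> R.
Hypothesis Hrho : is_metric rho.

Definition pair_dist (p q : X * X) : R :=
  rho (fst p) (fst q) + rho (snd p) (snd q).

Lemma pair_dist_nonneg (p q : X * X) : 0 <= pair_dist p q.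
Proof.
  destruct Hrho as [Hpos _]; unfold pair_dist.
  pose proof (Hpos (fst p) (fst q)); pose proof (Hpos (snd p) (snd q)); lra.
Qed.

Lemma pair_dist_sym (p q : X * X) : pair_dist p q = pair_dist q p.
Proof.
  destruct Hrho as [_ [_ [Hsym _]]]; unfold pair_dist.
  now rewrite (Hsym (fst p)), (Hsym (snd p)).
Qed.

Lemma pair_dist_triangle (p q r : X * X) :
  pair_dist p r <= pair_dist p q + pair_dist q r.
Proof.
  destruct Hrho as [_ [_ [_ Htri]]]; unfold pair_dist.
  pose proof (Htri (fst p) (fst q) (fst r));
  pose proof (Htri (snd p) (snd q) (snd r)); lra.
Qed.

Definition in_both (P : X -> Prop) (p : X * X) : Prop := P (fst p) /\ P (snd p).

Definition sym_map (H : X -> X -> X) (p : X * X) : X * X :=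
  (H (fst p) (snd p), H (snd p) (fst p)).

Variables (A B : X -> Prop) (F G : X -> X -> X).

Lemma coupled_iter_succ (x0 y0 : X) (n : nat) :
  coupled_iter F G x0 y0 (S n) =
  if Nat.even n then sym_map F (coupled_iter F G x0 y0 n)
  else sym_map G (coupled_iter F G x0 y0 n).
Proof. reflexivity. Qed.

Lemma even_succ_negb (n : nat) : Nat.even (S n) = negb (Nat.even n).
Proof. now rewrite Nat.even_succ, Nat.negb_even. Qed.

Hypothesis HF : forall x x', A x -> A x' -> B (F x x').
Hypothesis HG : forall y y', B y -> B y' -> A (G y y').

Lemma coupled_iter_in (x0 y0 : X) (Hx0 : A x0) (Hy0 : A y0) (n : nat) :
  in_both (if Nat.even n then A else B) (coupled_iter F G x0 y0 n).
Proof.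
  induction n as [|n IH]; [now split|].
  rewrite coupled_iter_succ, even_succ_negb.
  destruct (Nat.even n); destruct IH as [H1 H2]; split; simpl; auto.
Qed.

Variables (alpha beta c : R).
Hypothesis Hcontr : forall x x' y y', A x -> A x' -> B y -> B y' ->
  rho (F x x') (G y y') <= alpha * rho x y + beta * rho x' y' + c.

Lemma sym_map_contraction (p q : X * X) :
  in_both A p -> in_both B q ->
  pair_dist (sym_map F p) (sym_map G q) <= (alpha + beta) * pair_dist p q + 2 * c.
Proof.
  intros [Hp1 Hp2] [Hq1 Hq2]; unfold pair_dist, sym_map; simpl.
  pose proof (Hcontr _ _ _ _ Hp1 Hp2 Hq1 Hq2).
  pose proof (Hcontr _ _ _ _ Hp2 Hp1 Hq2 Hq1).
  lra.
Qed.

Hypotheses (Ha : 0 <= alpha) (Hb : 0 <= beta).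

Definition dist_to_reference (z : nat -> X * X) (n : nat) : R :=
  pair_dist (z n) (if Nat.even n then z 1%nat else z 2%nat).

Lemma dist_to_reference_step (x0 y0 : X) (Hx0 : A x0) (Hy0 : A y0) (n : nat) :
  let z := coupled_iter F G x0 y0 in
  dist_to_reference z (S n) <=
    (alpha + beta) * dist_to_reference z n
    + ((alpha + beta) * pair_dist (z 0%nat) (z 2%nat) + 2 * c).
Proof.
  intros z.
  assert (Hk : 0 <= alpha + beta) by lra.
  pose proof (pair_dist_nonneg (z 0%nat) (z 2%nat)) as HK.
  pose proof (coupled_iter_in x0 y0 Hx0 Hy0 n) as Hn; fold z in Hn.
  assert (H0 : in_both A (z 0%nat)) by exact (coupled_iter_in x0 y0 Hx0 Hy0 0).
  assert (H1 : in_both B (z 1%nat)) by exact (coupled_iter_in x0 y0 Hx0 Hy0 1).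
  unfold dist_to_reference; rewrite even_succ_negb.
  change (z (S n)) with (coupled_iter F G x0 y0 (S n)).
  rewrite coupled_iter_succ; fold z.
  destruct (Nat.even n); cbn [negb].
  - (* z(n+1) = T_F(z n) is compared with z 2 = T_G(z 1). *)
    pose proof (sym_map_contraction _ _ Hn H1) as C.
    change (sym_map G (z 1%nat)) with (z 2%nat) in C.
    pose proof (Rmult_le_pos _ _ Hk HK); lra.
  - (* z(n+1) = T_G(z n) is compared with z 1 = T_F(z 0), via z 2. *)
    pose proof (sym_map_contraction _ _ H0 Hn) as C.
    change (sym_map F (z 0%nat)) with (z 1%nat) in C.
    rewrite pair_dist_sym.
    pose proof (pair_dist_triangle (z 0%nat) (z 2%nat) (z n)) as T.
    rewrite (pair_dist_sym (z 2%nat) (z n)) in T.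
    pose proof (Rmult_le_compat_l _ _ _ Hk T); lra.
Qed.

Lemma coupled_iter_bounded (x0 y0 : X) (Hx0 : A x0) (Hy0 : A y0) :
  alpha + beta < 1 ->
  exists N, forall n,
    pair_dist (coupled_iter F G x0 y0 n) (coupled_iter F G x0 y0 1) <= N.
Proof.
  intros Hab; set (z := coupled_iter F G x0 y0).
  destruct (affine_recursion_bound (alpha + beta) _ (dist_to_reference z)
              ltac:(lra) Hab (dist_to_reference_step x0 y0 Hx0 Hy0)) as [M HM].
  exists (M + pair_dist (z 2%nat) (z 1%nat)); intros n.
  pose proof (HM n) as Hn; unfold dist_to_reference in Hn.
  pose proof (pair_dist_nonneg (z 2%nat) (z 1%nat)).
  destruct (Nat.even n).
  - lra.
  - pose proof (pair_dist_triangle (z n) (z 2%nat) (z 1%nat)); lra.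
Qed.

End CoupledIteration.

Theorem lemma34 (X : Type) (rho : X -> X -> R) (Hrho : is_metric rho)
  (A B : X -> Prop) (HA : exists a, A a) (HB : exists b, B b)
  (F G : X -> X -> X)
  (HF : forall x x', A x -> A x' -> B (F x x'))
  (HG : forall y y', B y -> B y' -> A (G y y'))
  (alpha beta : R) (Ha : 0 <= alpha) (Hb : 0 <= beta) (Hab : alpha + beta < 1)
  (Hcontr : forall x x' y y', A x -> A x' -> B y -> B y' ->
     rho (F x x') (G y y') <=
       alpha * rho x y + beta * rho x' y' + (1 - (alpha + beta)) * set_dist rho A B)
  (x0 y0 : X) (Hx0 : A x0) (Hy0 : A y0) :
  bounded_seq rho (fun n => fst (coupled_iter F G x0 y0 n)) /\
  bounded_seq rho (fun n => snd (coupled_iter F G x0 y0 n)).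
Proof.
  destruct (coupled_iter_bounded X rho Hrho A B F G HF HG alpha beta _ Hcontr
              Ha Hb x0 y0 Hx0 Hy0 Hab) as [N HN].
  pose proof (proj1 Hrho) as Hpos.
  split.
  - apply (bounded_seq_of_center rho Hrho _ (fst (coupled_iter F G x0 y0 1)) N); intros n; cbv beta.
    pose proof (HN n); pose proof (Hpos (snd (coupled_iter F G x0 y0 n)) (snd (coupled_iter F G x0 y0 1))).
    unfold pair_dist in *; lra.
  - apply (bounded_seq_of_center rho Hrho _ (snd (coupled_iter F G x0 y0 1)) N); intros n; cbv beta.
    pose proof (HN n); pose proof (Hpos (fst (coupled_iter F G x0 y0 n)) (fst (coupled_iter F G x0 y0 1))).
    unfold pair_dist in *; lra.
Qed.
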